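(* For all $\alpha\in[-1,1]$, \[ \Lambda(\alpha)\le c-|\alpha|(c-D),\qquad D=\mathbb E|F(0)|. \]
   Context: Let $c>0$, $q>0$, $\kappa>-1$. $F=(F(x))_{x\in\mathbb Z}$ and $B=(B(i))_{i\in\mathbb Z}$ are mutually independent families of i.i.d. random variables, $\mathbb P(B(i)=\pm1)=1/2$, and $F(x)$ has a density $\varrho$ that is even, continuous, strictly positive on $(-c,c)$, zero outside $(-c,c)$, with $\lim_{x\to c}\varrho(x)/|c-x|^{\kappa}=q$. A lazy walk satisfies $|\gamma(i+1)-\gamma(i)|\le1$; the action of a lazy walk $\gamma$ on $\{0,\dots,n\}$ is $A(B,F;\gamma)=\sum_{i=1}^nB(i)F(\gamma(i))$; $\bar A(B,F;n,k)$ is the minimal action over lazy walks from $(0,0)$ to $(n,k)$. The shape function $\Lambda$ is the deterministic function with $\bar A(B,F;n,[\alpha n])/n\to-\Lambda(\alpha)$ almost surely, $[\cdot]$ rounding towards $0$. *)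

From HB Require Import structures.
From mathcomp Require Import all_boot all_order all_algebra.
From mathcomp Require Import all_classical all_reals all_analysis.
Set Implicit Arguments. Unset Strict Implicit. Unset Printing Implicit Defensive.
Import Order.TTheory GRing.Theory Num.Theory.
Import numFieldNormedType.Exports.
Local Open Scope classical_set_scope.
Local Open Scope ring_scope.

Definition mutually_independent {d} {T : measurableType d} {R : realType}
  (P : probability T R) {I : eqType} (X : I -> T -> R) : Prop :=
  forall (J : seq I) (A : I -> set R), uniq J ->
    (forall i, i \in J -> measurable (A i)) ->
    P (\bigcap_(i in [set i | i \in J]) (X i @^-1` A i)) =
    (\big[*%E/1%E]_(i <- J) P (X i @^-1` A i))%E.

Definition round0 {R : realType} (x : R) : int :=
  if 0 <= x then Num.floor x else Num.ceil x.

Definition lazy_walk (n : nat) (k : int) (g : nat -> int) : Prop :=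
  g 0%N = 0 /\ g n = k /\ (forall i, (i < n)%N -> `|g i.+1 - g i| <= 1).

Definition action {T} {R : realType} (B F : int -> T -> R) (w : T)
  (n : nat) (g : nat -> int) : R :=
  \sum_(1 <= i < n.+1) B i%:Z w * F (g i) w.

Definition min_action {T} {R : realType} (B F : int -> T -> R) (w : T)
  (n : nat) (k : int) : R :=
  inf [set action B F w n g | g in lazy_walk n k].

Definition joint_family {T} {R : realType} (F B : int -> T -> R)
  (s : int + int) : T -> R :=
  match s with inl x => F x | inr i => B i end.

From HB Require Import structures.
From mathcomp Require Import all_boot all_order all_algebra.
From mathcomp Require Import all_classical all_reals all_analysis.
From mathcomp Require Import ring lra zify.
From mathcomp Require Import measurable_realfun.
Import Order.TTheory GRing.Theory Num.Theory.
Import numFieldNormedType.Exports.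
Local Open Scope classical_set_scope.
Local Open Scope ring_scope.
Set Implicit Arguments. Unset Strict Implicit. Unset Printing Implicit Defensive.

(* A lazy walk from 0 to k >= 0 must, for every level x = 1, ..., k, visit x
   for a first time; at that step the summand B(i) F(x) is at least - |F(x)|,
   and at every other step it is at least - c.  Hence
     - min_action(n, k) <= |F(1)| + ... + |F(k)| + (n - k) c,
   and symmetrically for k < 0.  The right-hand side divided by n has
   expectation (|k| D + (n - |k|) c) / n, which tends to |alpha| D +
   (1 - |alpha|) c along k = [alpha n], so Fatou's lemma bounds the
   almost sure limit Lambda(alpha).  Only |F| <= c, |B| <= 1 and the equality
   of the laws of the F(x) are used: neither the independence nor the local
   shape of the density matter. *)

Lemma ler_mul_sign (R : realDomainType) (b y : R) : `|b| <= 1 -> - `|y| <= b * y.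
Proof. by move=> b1; apply: lerNnormlW; rewrite normrM ler_piMl. Qed.

Section FirstPassage.
Variables (R : realType) (c : R) (f : int -> R).

Definition passage_bound (n m : nat) : R :=
  \sum_(x < m) `|f x.+1%:Z| + (n%:R - m%:R) * c.

Lemma passage_boundSn n m : passage_bound n.+1 m = passage_bound n m + c.
Proof. by rewrite /passage_bound mulrSr; ring. Qed.

Lemma passage_boundS n m :
  passage_bound n m.+1 = passage_bound n m + `|f m.+1%:Z| - c.
Proof. by rewrite /passage_bound big_ord_recr /= mulrSr; ring. Qed.

Lemma passage_boundSS n m :
  passage_bound n.+1 m.+1 = passage_bound n m + `|f m.+1%:Z|.
Proof. by rewrite passage_boundS passage_boundSn; ring. Qed.

Lemma passage_bound_ge0 n m : 0 <= c -> (m <= n)%N -> 0 <= passage_bound n m.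
Proof.
move=> c_ge0 mn; apply: addr_ge0; first exact: sumr_ge0.
by apply: mulr_ge0 => //; rewrite subr_ge0 ler_nat.
Qed.

Hypothesis f_le : forall x, `|f x| <= c.

Lemma passage_bound_antimono n j m : (j <= m)%N -> passage_bound n m <= passage_bound n j.
Proof.
elim: m => [|m IH]; first by rewrite leqn0 => /eqP ->.
rewrite leq_eqVlt => /orP[/eqP -> //|]; rewrite ltnS => /IH; apply: le_trans.
by rewrite passage_boundS; have := f_le m.+1%:Z; lra.
Qed.

(* [M] is the running maximum of the walk: a step that stays at or below it
   costs at least [- c], a step reaching the new level [M + 1] for the first
   time costs at least [- `|f (M + 1)|]. *)
Lemma walk_action_ge_passage (b : nat -> R) (g : nat -> int) n :
  (forall i, `|b i| <= 1) -> g 0%N = 0 ->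
  (forall i, (i < n)%N -> `|g i.+1 - g i| <= 1) ->
  exists2 M : nat, (forall i, (i <= n)%N -> g i <= M%:Z) &
    - passage_bound n M <= \sum_(1 <= i < n.+1) b i * f (g i).
Proof.
move=> b1 g0; elim: n => [|n IH] g_step.
  exists 0%N; first by move=> i; rewrite leqn0 => /eqP ->; rewrite g0.
  by rewrite /passage_bound big_ord0 big_geq // subrr mul0r addr0 oppr0.
have [M gM HM] := IH (fun i lt_in => g_step i (ltnW lt_in)).
have gM' i : (i < n.+1)%N -> g i <= M%:Z by rewrite ltnS; exact: gM.
rewrite big_nat_recr //=.
have [le_gM|lt_Mg] := lerP (g n.+1) M%:Z.
  exists M => [i|].
    by rewrite leq_eqVlt => /orP[/eqP -> //|]; exact: gM'.
  have stay : - c <= b n.+1 * f (g n.+1).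
    by apply: le_trans _ (ler_mul_sign (f (g n.+1)) (b1 n.+1)); rewrite lerN2.
  by rewrite passage_boundSn opprD lerD.
have gn1 : g n.+1 = M.+1%:Z.
  have := gM n (leqnn n); have := g_step n (ltnSn n).
  move: lt_Mg; rewrite -[M.+1]addn1 PoszD; lia.
exists M.+1 => [i|].
  rewrite leq_eqVlt => /orP[/eqP -> //|]; first by rewrite gn1.
  by move=> /gM' /le_trans; apply; rewrite lez_nat.
by rewrite passage_boundSS opprD lerD // -gn1 ler_mul_sign.
Qed.

Lemma lazy_walk_action_ge_passage (b : nat -> R) (g : nat -> int) n (k : int) :
  (forall i, `|b i| <= 1) -> lazy_walk n k g -> 0 <= k ->
  - passage_bound n `|k| <= \sum_(1 <= i < n.+1) b i * f (g i).
Proof.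
move=> b1 [g0 [gn g_step]] k_ge0.
have [M gM HM] := walk_action_ge_passage b1 g0 g_step.
apply: le_trans HM; rewrite lerN2; apply: passage_bound_antimono.
by have := gM n (leqnn n); rewrite gn; case: k k_ge0 {gn} => // k _; rewrite lez_nat.
Qed.

End FirstPassage.

Lemma lazy_walkN n k g : lazy_walk n k g -> lazy_walk n (- k) (fun i => - g i).
Proof.
move=> [g0 [gn g_step]]; split; first by rewrite g0 oppr0.
by split=> [|i /g_step]; [rewrite gn|rewrite -opprD normrN].
Qed.

Lemma min_action_ge_passage (R : realType) T (c : R) (B F : int -> T -> R) (w : T)
    n (k : int) :
  0 <= c -> (forall i, `|B i w| <= 1) -> (forall x, `|F x w| <= c) -> (`|k| <= n)%N ->
  - passage_bound c (fun x => F (sgz k * x) w) n `|k| <= min_action B F w n k.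
Proof.
move=> c_ge0 B1 F_le kn; rewrite /min_action.
have [->|/set0P ne] := eqVneq [set action B F w n g | g in lazy_walk n k] set0.
  by rewrite inf0 oppr_le0 passage_bound_ge0.
apply: lb_le_inf ne _ => _ [g walk_g <-]; rewrite /action.
move: walk_g; have [k_lt0|k_gt0|->] := ltrgtP k 0 => walk_g.
- rewrite ltr0_sgz // -abszN.
  have -> : (fun x => F (-1 * x) w) = (fun x => F (- x) w).
    by apply/funext => x; rewrite mulN1r.
  under eq_bigr do rewrite -[g _]opprK.
  by apply: lazy_walk_action_ge_passage (lazy_walkN walk_g) _ => //; rewrite oppr_ge0 ltW.
- rewrite gtr0_sgz //.
  have -> : (fun x => F (1 * x) w) = (fun x => F x w).
    by apply/funext => x; rewrite mul1r.
  exact: lazy_walk_action_ge_passage walk_g (ltW k_gt0).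
- have := lazy_walk_action_ge_passage (f := fun x => F x w) F_le B1 walk_g (lexx 0).
  by rewrite /passage_bound !big_ord0.
Qed.

Lemma round0_bounds (R : realType) (x : R) :
  (`|round0 x|%N)%:R <= `|x| /\ `|x| - 1 < (`|round0 x|%N)%:R.
Proof.
rewrite natr_absz /round0; case: ifPn => [x_ge0|/negbTE x_lt0].
  rewrite !ger0_norm ?ler0z ?floor_ge0 //; split; first exact: floor_le.
  by have := floorD1_gt x; rewrite intrD; lra.
have {}x_lt0 : x < 0 by rewrite ltNge x_lt0.
rewrite !ler0_norm ?ler0z ?ceil_le0 ?(ltW x_lt0) //.
by have := ceil_ge x; have := ceilB1_lt x; rewrite intrB; lra.
Qed.

Lemma abs_round0_le (R : realType) (a : R) n : `|a| <= 1 -> (`|round0 (a * n%:R)| <= n)%N.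
Proof.
move=> a1; rewrite -(ler_nat R); apply: le_trans (round0_bounds _).1 _.
by rewrite normrM normr_nat ler_piMl.
Qed.

Lemma cvg_abs_round0_ratio (R : realType) (a : R) :
  (fun n : nat => (`|round0 (a * n%:R)|%N)%:R / n%:R) @ \oo --> `|a|.
Proof.
apply: (@squeeze_cvgr _ _ _ _ (fun n => `|a| - 2 * n.+1%:R^-1) (fun => `|a|)).
- near=> n.
  have n_ge1 : (1 <= n)%N by near: n; exact: nbhs_infty_ge.
  have n_gt0 : (0 : R) < n%:R by rewrite ltr0n.
  have [h1 h2] := round0_bounds (a * n%:R).
  rewrite normrM (ger0_norm (ltW n_gt0)) in h1 h2.
  rewrite ler_pdivrMr // h1 andbT ler_pdivlMr //.
  have : (n.+1%:R : R) <= 2 * n%:R.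
    by rewrite -natrM ler_nat; lia.
  have : n.+1%:R^-1 * n.+1%:R = 1 :> R by rewrite mulVf.
  have : (0 : R) < n.+1%:R^-1 by rewrite invr_gt0.
  move: h2; set N := n%:R; set h := n.+1%:R^-1; nra.
- rewrite -[X in _ --> X]subr0; apply: cvgB; first exact: cvg_cst.
  rewrite -(mulr0 2); apply: cvgMl_tmp; exact: cvg_harmonic.
- exact: cvg_cst.
Unshelve. all: by end_near.
Qed.

Lemma cvg_mean_passage (R : realType) (D c a : R) (m : nat -> nat) :
  (fun n => (m n)%:R / n%:R) @ \oo --> a ->
  (fun n => ((m n)%:R * D + (n%:R - (m n)%:R) * c) / n%:R) @ \oo --> a * D + (1 - a) * c.
Proof.
move=> ma; pose r n := (m n)%:R / n%:R : R.
have eq_r : \forall n \near \oo,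
    r n * D + (1 - r n) * c = ((m n)%:R * D + (n%:R - (m n)%:R) * c) / n%:R.
  near=> n; have n_gt0 : (0 : R) < n%:R by rewrite ltr0n; near: n; exact: nbhs_infty_gt.
  by rewrite /r; field; rewrite gt_eqF.
apply: cvg_trans (near_eq_cvg eq_r) _.
by apply: cvgD; apply: cvgMr_tmp => //; apply: cvgB => //; exact: cvg_cst.
Unshelve. all: by end_near.
Qed.

Section AlmostSureBounds.
Context d (T : measurableType d) (R : realType) (P : probability T R).

Lemma ae_forall_int (Q : int -> T -> Prop) :
  (forall x, {ae P, forall w, Q x w}) -> {ae P, forall w, forall x, Q x w}.
Proof.
move=> aeQ; have aeQ2 n : {ae P, forall w, Q (Posz n) w /\ Q (Negz n) w}.
  by apply: filterS2 (aeQ (Posz n)) (aeQ (Negz n)) => w; split.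
by apply: filterS (ae_foralln aeQ2) => w Qw [] n; [exact: (Qw n).1|exact: (Qw n).2].
Qed.

Lemma ae_abs_le1_of_sign (X : T -> R) : measurable_fun setT X ->
  P (X @^-1` [set 1]) = (2^-1)%:E -> P (X @^-1` [set -1]) = (2^-1)%:E ->
  {ae P, forall w, `|X w| <= 1}.
Proof.
move=> mX X1 XN1.
have m1 : measurable (X @^-1` [set 1]) by rewrite -[_ @^-1` _]setTI; exact: mX.
have mN1 : measurable (X @^-1` [set -1]) by rewrite -[_ @^-1` _]setTI; exact: mX.
exists (~` (X @^-1` [set 1] `|` X @^-1` [set -1])); split.
- exact/measurableC/measurableU.
- rewrite probability_setC; last exact: measurableU.
  rewrite measureU //; last first.
    apply/seteqP; split => // w [/= -> ] /eqP.
    by rewrite -subr_eq0 opprK (_ : 1 + 1 = 2%:R :> R) // pnatr_eq0.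
  have -> : (P (X @^-1` [set 1%R]) + P (X @^-1` [set (-1)%R]) = 1)%E.
    by rewrite X1 XN1 -EFinD (_ : 2^-1 + 2^-1 = 1 :> R) //; field.
  by rewrite subee.
- by move=> w /= Xw [] /= X_w; apply: Xw; rewrite X_w ?normr1 ?normrN1.
Qed.

Lemma ae_abs_le_of_density (X : T -> R) (c : R) (rho : R -> R) :
  measurable_fun setT X -> (forall x, ~ (- c < x < c) -> rho x = 0) ->
  (forall A : set R, measurable A ->
     P (X @^-1` A) = (\int[lebesgue_measure]_(y in A) (rho y)%:E)%E) ->
  {ae P, forall w, `|X w| <= c}.
Proof.
move=> mX rho0 lawX; pose O := ~` [set` `]- c, c[].
have mO : measurable O by apply: measurableC; exact: measurable_itv.
exists (X @^-1` O); split.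
- by rewrite -[_ @^-1` _]setTI; exact: mX.
- rewrite lawX // (eq_integral (fun=> 0%E)) ?integral0 // => y.
  by rewrite inE /O /= in_itv /= => /rho0 ->.
- move=> w /= Xw; rewrite /O /= in_itv /= => /andP[cX Xc].
  by apply: Xw; rewrite ler_norml !ltW.
Qed.

Lemma integral_abs_le_ae (X : T -> R) (c : R) : 0 <= c -> measurable_fun setT X ->
  {ae P, forall w, `|X w| <= c} -> (\int[P]_w (`|X w|)%:E <= c%:E)%E.
Proof.
move=> c_ge0 mX Xc.
have := @ae_ge0_le_integral _ _ _ P setT measurableT (fun w => (`|X w|)%:E) (cst c%:E).
rewrite integral_cst // [X in (_ * X)%E]probability_setT mule1; apply.
- by move=> w _; rewrite lee_fin.
- by apply/measurable_EFinP; apply: measurableT_comp => //; exact: normr_measurable.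
- by move=> w _; rewrite lee_fin.
- exact: measurable_cst.
- by apply: filterS Xc => w Xw _; rewrite lee_fin.
Qed.

End AlmostSureBounds.

Section PassageExpectation.
Context d (T : measurableType d) (R : realType) (P : probability T R).

Lemma integral_abs_eq_of_same_law (X Y : T -> R) :
  measurable_fun setT X -> measurable_fun setT Y ->
  (forall A : set R, measurable A -> P (X @^-1` A) = P (Y @^-1` A)) ->
  (\int[P]_w (`|X w|)%:E = \int[P]_w (`|Y w|)%:E)%E.
Proof.
move=> mX mY lawXY.
have mabs : measurable_fun setT (fun t : R => (`|t|)%:E).
  by apply/measurable_EFinP; exact: normr_measurable.
rewrite -[LHS](ge0_integral_pushforward mX P measurableT mabs) ?preimage_setT //.
rewrite -[RHS](ge0_integral_pushforward mY P measurableT mabs) ?preimage_setT //.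
by apply: eq_measure_integral => A mA _ /=; rewrite /pushforward lawXY.
Qed.

Variables (F : int -> T -> R) (D c : R).
Hypotheses (mF : forall x, measurable_fun setT (F x))
  (F_mean : forall x, (\int[P]_w (`|F x w|)%:E = D%:E)%E) (c_ge0 : 0 <= c).

Lemma measurable_passage_bound (s : int) n m :
  measurable_fun setT (fun w => passage_bound c (fun x => F (s * x) w) n m).
Proof.
apply: measurable_funD; last exact: measurable_cst.
by apply: measurable_sum => x; apply: measurableT_comp => //; exact: normr_measurable.
Qed.

Lemma integral_passage_bound_ratio (s : int) n m : (m <= n)%N ->
  (\int[P]_w (passage_bound c (fun x => F (s * x) w) n m / n%:R)%:E =
   ((m%:R * D + (n%:R - m%:R) * c) / n%:R)%:E)%E.
Proof.
move=> mn.
have mFa x : measurable_fun setT (fun w => (`|F x w|)%:E).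
  by apply/measurable_EFinP; apply: measurableT_comp => //; exact: normr_measurable.
have passage_mean : (\int[P]_w (passage_bound c (fun x => F (s * x) w) n m)%:E =
    (m%:R * D + (n%:R - m%:R) * c)%:E)%E.
  under eq_integral do rewrite /passage_bound EFinD -sumEFin.
  rewrite ge0_integralD //; first last.
  - by move=> w _; rewrite lee_fin mulr_ge0 // subr_ge0 ler_nat.
  - exact: emeasurable_sum.
  - by move=> w _; apply: sume_ge0 => *; rewrite lee_fin.
  rewrite ge0_integral_sum // integral_cst // [X in (_ * X)%E]probability_setT mule1.
  under eq_bigr do rewrite F_mean.
  by rewrite sumEFin sumr_const card_ord -EFinD mulr_natl.
under eq_integral do rewrite EFinM.
rewrite ge0_integralZr ?passage_mean -?EFinM //.
- exact/measurable_EFinP/measurable_passage_bound.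
- by move=> w _; rewrite lee_fin passage_bound_ge0.
Qed.

End PassageExpectation.

Lemma le_limn_einf (R : realType) (u v : (\bar R)^nat) :
  (forall n, (u n <= v n)%E) -> (limn_einf u <= limn_einf v)%E.
Proof.
move=> uv; rewrite !limn_einf_lim; apply: lee_lim; [exact: is_cvg_einfs|exact: is_cvg_einfs|].
apply: nearW => n /=; apply: le_ereal_inf_tmp => _ [j jn <-].
by apply: le_trans (uv j); apply: ereal_inf_lbound; exists j.
Qed.

Lemma limn_einf_EFin (R : realType) (u : R^nat) (l : R) :
  u @ \oo --> l -> limn_einf (fun n => (u n)%:E) = l%:E.
Proof. by move=> ul; apply: (cvg_limn_einf_sup _).1; apply: cvg_EFin => //; exact: nearW. Qed.

Lemma le_lim_integral_of_ae_le_limn_einf d (T : measurableType d) (R : realType)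
    (P : probability T R) (Z : (T -> \bar R)^nat) (u : R^nat) (L l : R) :
  (forall n, measurable_fun setT (Z n)) -> (forall n w, (0 <= Z n w)%E) ->
  (forall n, (\int[P]_w Z n w)%E = (u n)%:E) -> u @ \oo --> l ->
  {ae P, forall w, (L%:E <= limn_einf (Z^~ w))%E} -> L <= l.
Proof.
move=> mZ Z_ge0 intZ ul LZ.
have l_ge0 : 0 <= l.
  rewrite -lee_fin -(limn_einf_EFin ul) -(limn_einf_EFin (cvg_cst 0)).
  by apply: le_limn_einf => n; rewrite -intZ integral_ge0.
have [L_lt0|L_ge0] := ltP L 0; first by rewrite ltW // (lt_le_trans L_lt0).
have mliminf : measurable_fun setT (fun w => limn_einf (Z^~ w)).
  apply: measurableT_comp; first exact: oppe_measurable.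
  apply: (@measurable_fun_limn_esup _ _ _ _ (fun n w => - Z n w)%E) => n.
  by apply: measurableT_comp => //; exact: oppe_measurable.
have liminf_ge0 w : (0 <= limn_einf (Z^~ w))%E.
  have := @le_limn_einf R (fun=> 0%:E) (Z^~ w) (Z_ge0^~ w).
  by rewrite (limn_einf_EFin (cvg_cst 0)).
rewrite -lee_fin -(limn_einf_EFin ul).
under [X in (_ <= limn_einf X)%E]eq_fun do rewrite -intZ.
apply: le_trans (fatou P measurableT mZ (fun n w _ => Z_ge0 n w)).
rewrite -[L%:E]mule1 -(probability_setT P) -integral_cst //.
by apply: ae_ge0_le_integral => //; apply: filterS LZ => w LZw _.
Qed.

Theorem lemma3p6 (R : realType) (c q kappa : R) (rho : R -> R)
  (d : measure_display) (T : measurableType d) (P : probability T R)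
  (F B : int -> T -> R) (Lambda : R -> R) :
  0 < c -> 0 < q -> -1 < kappa ->
  (forall x, rho (- x) = rho x) ->
  {within [set x | - c < x < c], continuous rho} ->
  (forall x, - c < x < c -> 0 < rho x) ->
  (forall x, ~ (- c < x < c) -> rho x = 0) ->
  (fun x => rho x / (`|c - x| `^ kappa)) @ at_left c --> q ->
  (forall x, measurable_fun setT (F x)) ->
  (forall i, measurable_fun setT (B i)) ->
  mutually_independent P (joint_family F B) ->
  (forall x (A : set R), measurable A ->
     P (F x @^-1` A) = (\int[lebesgue_measure]_(y in A) (rho y)%:E)%E) ->
  (forall i, P (B i @^-1` [set 1]) = (2^-1)%:E /\
             P (B i @^-1` [set -1]) = (2^-1)%:E) ->
  (forall alpha, -1 <= alpha <= 1 ->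
     {ae P, forall w,
        (fun n : nat => min_action B F w n (round0 (alpha * n%:R)) / n%:R)
          @ \oo --> - Lambda alpha}) ->
  forall alpha, -1 <= alpha <= 1 ->
    ((Lambda alpha)%:E <=
     (c - `|alpha| * c)%:E + `|alpha|%:E * \int[P]_w (`|F 0 w|)%:E)%E.
Proof.
move=> c_gt0 _ _ _ _ _ rho0 _ mF mB _ lawF lawB shape alpha alpha1.
have c_ge0 := ltW c_gt0; have alpha_le1 : `|alpha| <= 1 by rewrite ler_norml.
have F_le : {ae P, forall w x, `|F x w| <= c}.
  by apply: ae_forall_int => x; exact: ae_abs_le_of_density (mF x) rho0 (lawF x).
have B_le1 : {ae P, forall w i, `|B i w| <= 1}.
  by apply: ae_forall_int => i; exact: ae_abs_le1_of_sign (mB i) (lawB i).1 (lawB i).2.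
have mean_F x : (\int[P]_w (`|F x w|)%:E = \int[P]_w (`|F 0 w|)%:E)%E.
  by apply: integral_abs_eq_of_same_law => // A mA; rewrite !lawF.
have mean_fin : (\int[P]_w (`|F 0 w|)%:E)%E \is a fin_num.
  rewrite ge0_fin_numE ?integral_ge0 //; apply: le_lt_trans _ (ltry c).
  exact: integral_abs_le_ae c_ge0 (mF 0) (filterS (fun w Fw => Fw 0) F_le).
move: mean_F; rewrite -(fineK mean_fin); set D := fine _ => mean_F.
pose k n := round0 (alpha * n%:R).
pose Z n w := (passage_bound c (fun x => F (sgz (k n) * x) w) n `|k n| / n%:R)%:E.
have k_le n : (`|k n| <= n)%N by exact: abs_round0_le.
rewrite -EFinM -EFinD lee_fin (_ : _ + _ = `|alpha| * D + (1 - `|alpha|) * c); last by ring.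
apply: (@le_lim_integral_of_ae_le_limn_einf _ _ _ P Z).
- by move=> n; apply/measurable_EFinP/measurable_funM => //; exact: measurable_passage_bound.
- by move=> n w; rewrite lee_fin divr_ge0 ?passage_bound_ge0.
- by move=> n; exact: integral_passage_bound_ratio.
- by apply: (cvg_mean_passage (m := fun n => `|k n|%N)); exact: cvg_abs_round0_ratio.
apply: filterS3 F_le B_le1 (shape alpha alpha1) => w Fw Bw cvg_w.
rewrite -[Lambda alpha]opprK -(limn_einf_EFin (cvgN cvg_w)); apply: le_limn_einf => n.
rewrite lee_fin /= -mulNr ler_wpM2r ?invr_ge0 // lerNl.
exact: min_action_ge_passage.
Qed.
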